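(* Let $y_1,\dots,y_n$ be $(n-1)$ times continuously differentiable on an open interval $I$. For $h\ne 0$ let $C_n^h(x)$ be the determinant of the $n\times n$ matrix whose $(i,j)$ entry is $y_j(x+(i-1)h)$, and let $W_n(x)$ be the determinant of the $n\times n$ matrix whose $(i,j)$ entry is $y_j^{(i-1)}(x)$, $i,j=1,\dots,n$. Then for every $x\in I$, $$\lim_{h\to 0}\frac{C_n^h(x)}{h^{n(n-1)/2}}=W_n(x).$$ *)

From HB Require Import structures.
From mathcomp Require Import all_boot all_order all_algebra.
From mathcomp Require Import all_classical all_reals all_analysis.
Set Implicit Arguments. Unset Strict Implicit. Unset Printing Implicit Defensive.
Import Order.TTheory GRing.Theory Num.Theory.
Import numFieldNormedType.Exports.
Local Open Scope ring_scope.
Local Open Scope classical_set_scope.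

Definition Ck_on (R : realType) (k : nat) (I : set R) (f : R -> R) : Prop :=
  (forall m : nat, (m < k)%N -> forall x, I x -> derivable (derive1n m f) x 1) /\
  (forall x, I x -> {for x, continuous (derive1n k f)}).

Definition casorati (R : realType) (n : nat) (y : 'I_n -> R -> R) (h x : R) : R :=
  \det (\matrix_(i < n, j < n) y j (x + i%:R * h)).

Definition wronskian (R : realType) (n : nat) (y : 'I_n -> R -> R) (x : R) : R :=
  \det (\matrix_(i < n, j < n) derive1n i (y j) x).

From HB Require Import structures.
From mathcomp Require Import all_boot all_order all_algebra.
From mathcomp Require Import all_classical all_reals all_analysis.
From mathcomp Require Import ring.
Import Order.TTheory GRing.Theory Num.Theory.
Import numFieldNormedType.Exports.
Local Open Scope ring_scope.
Local Open Scope classical_set_scope.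

(* Taylor's formula with Peano remainder at x gives, at every node x + i h,
   y_j (x + i h) = \sum_(k < n) (i h)^k / k! * y_j^(k) (x) + o(h^(n-1)).
   In matrix form the Casorati matrix is Q D(h) W + E(h), where Q = [i^k / k!]
   has determinant 1 (a Vandermonde determinant divided by \prod_k k!),
   D(h) = diag (h^k) has determinant h^(n(n-1)/2), W is the Wronski matrix and
   E(h) = o(h^(n-1)). Hence C_n^h(x) / h^(n(n-1)/2) = det (W + D(h)^-1 Q^-1 E(h)),
   and the correction vanishes in the limit because its k-th row is E(h)
   divided by h^k with k <= n - 1. *)

Lemma MVT_between {R : realType} {g dg : R -> R} {x u : R} :
  (forall c, `|c - x| <= `|u - x| -> is_derive c 1 g (dg c)) ->
  exists2 c, `|c - x| <= `|u - x| & g u - g x = dg c * (u - x).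
Proof.
move=> gd.
have MVT_seg (a b : R) : a <= b ->
    (forall c, c \in `[a, b]%R -> `|c - x| <= `|u - x|) ->
    exists2 c, `|c - x| <= `|u - x| & g b - g a = dg c * (b - a).
  move=> ab ab_near.
  have gd_ab (c : R) : c \in `[a, b]%R -> is_derive c 1 g (dg c).
    by move=> /ab_near; apply: gd.
  have gd_oo c : c \in `]a, b[%R -> is_derive c 1 g (dg c).
    by move=> /subset_itv_oo_cc /gd_ab.
  have g_cont : {within `[a, b], continuous g}.
    by apply: derivable_within_continuous => c c_ab; case: (gd_ab c c_ab).
  have [c c_ab ->] := MVT_segment ab gd_oo g_cont.
  by exists c => //; apply: ab_near.
have [xu|ux] := leP x u.
  apply: MVT_seg => // c; rewrite in_itv /= => /andP[xc cu].
  by rewrite !ger0_norm ?subr_ge0 // lerD2r.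
have [|c c_near gE] := MVT_seg u x (ltW ux).
  move=> c; rewrite in_itv /= => /andP[uc cx].
  by rewrite !ler0_norm ?subr_le0 ?(ltW ux) // lerN2 lerD2r.
by exists c => //; apply/eqP; rewrite -opprB gE -mulrN opprB.
Qed.

Definition littleo_pow {R : realType} (g : R -> R) (x : R) (N : nat) : Prop :=
  forall e, 0 < e -> \forall u \near x, `|g u| <= e * `|u - x| ^+ N.

Lemma littleo_pow_antiderivative {R : realType} (g dg : R -> R) (x : R) (N : nat) :
  (\forall u \near x, is_derive u (1 : R) g (dg u)) -> g x = 0 ->
  littleo_pow dg x N -> littleo_pow g x N.+1.
Proof.
move=> gd gx0 dg_o e e0.
have [d d0 /= near_d] : nbhs_ball x
    [set u | is_derive u (1 : R) g (dg u) /\ `|dg u| <= e * `|u - x| ^+ N].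
  by apply/nbhs_ballP; apply: filterI; [exact: gd | exact: dg_o].
apply/nbhs_ballP; exists d => // u xu.
have closer c : `|c - x| <= `|u - x| -> ball x d c.
  by move=> cu; rewrite /ball /= distrC (le_lt_trans cu) // -distrC.
rewrite -[g u]subr0 -gx0.
have [c cu ->] := MVT_between (fun c cu => (near_d c (closer c cu)).1).
rewrite normrM exprSr mulrA ler_wpM2r //.
apply: le_trans (near_d c (closer c cu)).2 _.
by rewrite ler_pM2l // lerXn2r ?nnegrE.
Qed.

(* [N] terms, i.e. the Taylor polynomial of degree [N - 1]. *)
Definition taylor_poly {R : realType} (f : R -> R) (N : nat) (x u : R) : R :=
  \sum_(k < N) derive1n k f x * ((u - x) ^+ k / k`!%:R).

Lemma is_derive_taylor_term {R : realType} (c x u : R) (k : nat) :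
  is_derive u (1 : R) (fun v => c * ((v - x) ^+ k.+1 / k.+1`!%:R))
    (c * ((u - x) ^+ k / k`!%:R)).
Proof.
have dX : is_derive u (1 : R) (fun v => v - x) 1.
  by have := @is_deriveB R R R id (cst x) u 1 1 0; rewrite subr0; apply.
have := is_deriveZ (c / k.+1`!%:R) (is_deriveX k.+1 dX).
have -> : (c / k.+1`!%:R) \*: ((fun v => v - x) ^+ k.+1) =
    (fun v => c * ((v - x) ^+ k.+1 / k.+1`!%:R)).
  by apply/funext => v /=; rewrite exprfctE /GRing.scale /=; ring.
move=> dT; apply: is_derive_eq dT _.
rewrite /GRing.scale /= mulr1 factS natrM invfM.
by field; rewrite addrC natr1 !pnatr_eq0 -!lt0n fact_gt0.
Qed.

Lemma is_derive_taylor_poly {R : realType} (f : R -> R) (N : nat) (x u : R) :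
  is_derive u (1 : R) (taylor_poly f N.+1 x) (taylor_poly (derive1 f) N x u).
Proof.
elim: N => [|N IH].
  have -> : taylor_poly f 1 x = cst (f x).
    by apply/funext => v; rewrite /taylor_poly big_ord1 expr0 divr1 mulr1.
  by rewrite /taylor_poly big_ord0; apply: is_derive_cst.
have -> : taylor_poly f N.+2 x = taylor_poly f N.+1 x +
    (fun v => derive1n N.+1 f x * ((v - x) ^+ N.+1 / N.+1`!%:R)).
  by apply/funext => v; rewrite /taylor_poly big_ord_recr.
rewrite /taylor_poly big_ord_recr /= -derive1Sn.
exact: is_deriveD IH (is_derive_taylor_term _ _ _ _).
Qed.

Lemma taylor_poly_center {R : realType} (f : R -> R) (N : nat) (x : R) :
  taylor_poly f N.+1 x x = f x.
Proof.
rewrite /taylor_poly big_ord_recl expr0 divr1 mulr1 big1 ?addr0 //.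
by move=> i _; rewrite subrr expr0n mul0r mulr0.
Qed.

Lemma taylor_peano {R : realType} (N : nat) (f : R -> R) (x : R) :
  (forall m, (m < N)%N -> \forall u \near x, derivable (derive1n m f) u 1) ->
  {for x, continuous (derive1n N f)} ->
  littleo_pow (f - taylor_poly f N.+1 x) x N.
Proof.
elim: N => [|N IH] in f * => fd fNc.
  move=> e e0; have /cvgrPdist_le /(_ e e0) := fNc; apply: filterS => u.
  by rewrite !fctE /taylor_poly big_ord1 expr0 mulr1 divr1 mulr1 distrC.
apply: (littleo_pow_antiderivative _ (derive1 f - taylor_poly (derive1 f) N.+1 x)).
- have := fd 0%N erefl; apply: filterS => u; rewrite derive1n0 => fu.
  have df : is_derive u (1 : R) f (derive1 f u) by rewrite derive1E; exact/derivableP.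
  exact: is_deriveB df (is_derive_taylor_poly f N.+1 x u).
- by rewrite !fctE taylor_poly_center subrr.
- by apply: IH => [m mN|]; rewrite -derive1Sn //; exact: fd.
Qed.

Lemma littleo_pow_scale {R : realType} (g : R -> R) (x c : R) (N : nat) :
  littleo_pow g x N -> littleo_pow (fun h => g (x + c * h)) 0 N.
Proof.
move=> g_o e e0; set C := `|c| ^+ N.
have C1_gt0 : 0 < C + 1 by rewrite ltr_wpDl ?exprn_ge0.
have x_ch : (fun h => x + c * h) @ (0 : R) --> x.
  have : (fun h => x + c * h) @ (0 : R) --> x + c * 0.
    by apply: cvgD; [exact: cvg_cst | exact: cvgMl_tmp cvg_id].
  by rewrite mulr0 addr0.
near=> h.
have : `|g (x + c * h)| <= e / (C + 1) * `|x + c * h - x| ^+ N.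
  by near: h; exact: x_ch _ (g_o _ (divr_gt0 e0 C1_gt0)).
rewrite [x + _ - x]addrC addKr subr0 normrM exprMn -/C => /le_trans; apply.
by rewrite mulrA ler_wpM2r ?exprn_ge0 // mulrAC ler_pdivrMr // ler_pM2l // lerDl.
Unshelve. all: by end_near.
Qed.

Lemma littleo_pow_cvg0 {R : realType} (g : R -> R) (N k : nat) :
  littleo_pow g 0 N -> (k <= N)%N -> (fun h => h ^- k * g h) @ 0^' --> 0.
Proof.
move=> g_o kN; apply/cvgr0Pnorm_le => e e0; near=> h.
have h0 : h != 0 by near: h; exact: nbhs_dnbhs_neq.
have h1 : `|h| <= 1 by near: h; exact: dnbhs0_le.
have gh : `|g h| <= e * `|h - 0| ^+ N by near: h; exact: nbhs_dnbhs (g_o e e0).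
rewrite normrM normfV normrX mulrC ler_pdivrMr ?exprn_gt0 ?normr_gt0 //.
apply: le_trans gh _; rewrite subr0 -(subnK kN) exprD mulrA.
rewrite ler_pM2r ?exprn_gt0 ?normr_gt0 //.
by apply: ler_piMr; [exact: ltW | exact: exprn_ile1].
Unshelve. all: by end_near.
Qed.

Lemma prod_natr_sub_fact (R : numFieldType) (n : nat) :
  \prod_(i < n) ((n%:R : R) - i%:R) = n`!%:R.
Proof.
elim: n => [|n IH]; first by rewrite big_ord0.
rewrite big_ord_recl subr0 factS natrM -IH; congr (_ * _).
by apply: eq_bigr => i _; rewrite lift0 -!natr1 opprD addrACA subrr addr0.
Qed.

Lemma prod_natr_pair_diff (R : numFieldType) (n : nat) :
  \prod_(i < n) \prod_(j < n | (i < j)%N) ((j%:R : R) - i%:R) = \prod_(k < n) k`!%:R.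
Proof.
elim: n => [|n IH]; first by rewrite !big_ord0.
rewrite big_ord_recr /= [X in _ * X]big1 ?mulr1 => [|j]; last by rewrite ltnNge -ltnS ltn_ord.
rewrite [RHS]big_ord_recr /= -IH -prod_natr_sub_fact -big_split /=.
by apply: eq_bigr => i _; rewrite big_mkcond big_ord_recr /= -big_mkcond /= ltn_ord.
Qed.

Definition taylor_mx (R : numFieldType) (n : nat) : 'M[R]_n :=
  \matrix_(i < n, k < n) ((i%:R : R) ^+ k / k`!%:R).

Lemma det_taylor_mx (R : numFieldType) (n : nat) : \det (taylor_mx R n) = 1.
Proof.
have -> : taylor_mx R n = (Vandermonde n (\row_(i < n) (i%:R : R)))^T *m
    diag_mx (\row_(k < n) (k`!%:R : R)^-1).
  by apply/matrixP => i k; rewrite mul_mx_diag !mxE.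
rewrite det_mulmx det_tr det_diag det_Vandermonde.
rewrite (eq_bigr (fun i : 'I_n => \prod_(j < n | (i < j)%N) ((j%:R : R) - i%:R))); last first.
  by move=> i _; apply: eq_bigr => j _; rewrite !mxE.
under [X in _ * X]eq_bigr => k _ do rewrite mxE.
rewrite prod_natr_pair_diff prodfV divff //.
by rewrite prodf_seq_neq0; apply/allP => k _ /=; rewrite pnatr_eq0 -lt0n fact_gt0.
Qed.

Lemma cvg_det (R : numFieldType) (T : Type) (F : set_system T) {FF : Filter F}
    (n : nat) (M : T -> 'M[R]_n) (L : 'M[R]_n) :
  (forall i j, M t i j @[t --> F] --> L i j) -> \det (M t) @[t --> F] --> \det L.
Proof.
move=> ML; apply: (cvg_big add_continuous) => s _.
apply: cvgMl_tmp; apply: (cvg_big mul_continuous) => i _; exact: ML.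
Qed.

Definition pow_diag_mx {R : pzRingType} (n : nat) (h : R) : 'M[R]_n :=
  diag_mx (\row_(k < n) h ^+ k).

Lemma pow_diag_mxV (R : fieldType) (n : nat) (h : R) : h != 0 ->
  pow_diag_mx n h *m pow_diag_mx n h^-1 = 1%:M.
Proof.
move=> h0; apply/matrixP => a b; rewrite mul_diag_mx !mxE exprVn.
by case: eqVneq => [->|]; rewrite ?mulr1n ?mulr0n ?mulr0 // divff // expf_neq0.
Qed.

Lemma det_pow_diag_mx (R : comPzRingType) (n : nat) (h : R) :
  \det (pow_diag_mx n h) = h ^+ ((n * n.-1) %/ 2).
Proof.
rewrite det_diag; under eq_bigr do rewrite mxE.
by rewrite prodrXr divn2 -bin2 -bin2_sum big_mkord.
Qed.

Section CasoratiFactorization.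
Context {R : realType} {n : nat} (y : 'I_n -> R -> R) (x : R).

Definition wronski_mx : 'M[R]_n := \matrix_(i < n, j < n) derive1n i (y j) x.

Definition taylor_rem_mx (h : R) : 'M[R]_n :=
  \matrix_(i < n, j < n) (y j - taylor_poly (y j) n x) (x + i%:R * h).

Lemma casorati_mx_taylor (h : R) :
  \matrix_(i < n, j < n) y j (x + i%:R * h) =
  taylor_mx R n *m pow_diag_mx n h *m wronski_mx + taylor_rem_mx h.
Proof.
apply/matrixP => i j; rewrite !mxE !fctE addrCA -[LHS]addr0; congr (_ + _).
apply/esym/eqP; rewrite subr_eq0 /taylor_poly; apply/eqP.
apply: eq_bigr => k _; rewrite mul_mx_diag !mxE (addrC x) addrK exprMn.
by rewrite mulrC mulrAC.
Qed.

Lemma casorati_taylor_factor (h : R) : h != 0 ->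
  casorati y h x / h ^+ ((n * n.-1) %/ 2) =
  \det (wronski_mx + pow_diag_mx n h^-1 *m (invmx (taylor_mx R n) *m taylor_rem_mx h)).
Proof.
move=> h0; have Q_unit : taylor_mx R n \in unitmx.
  by rewrite unitmxE det_taylor_mx unitr1.
rewrite /casorati casorati_mx_taylor -det_pow_diag_mx.
have rem_factor : taylor_rem_mx h =
    taylor_mx R n *m pow_diag_mx n h *m (pow_diag_mx n h^-1 *m
      (invmx (taylor_mx R n) *m taylor_rem_mx h)).
  by rewrite -mulmxA [X in _ *m X]mulmxA pow_diag_mxV // mul1mx mulmxA mulmxV ?mul1mx.
rewrite {1}rem_factor -mulmxDr !det_mulmx det_taylor_mx mul1r mulrAC divff ?mul1r //.
by rewrite det_pow_diag_mx expf_neq0.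
Qed.

End CasoratiFactorization.

Lemma Ck_on_taylor_peano {R : realType} {I : set R} {N : nat} {f : R -> R} {x : R} :
  open I -> I x -> Ck_on N I f -> littleo_pow (f - taylor_poly f N.+1 x) x N.
Proof.
move=> I_open Ix [fd fc]; apply: taylor_peano (fc x Ix) => m mN.
by apply: filterS (I_open x Ix) => u Iu; apply: fd.
Qed.

Lemma cvg0_pow_diag_mxV_mulmx {R : realType} {n : nat} (A : 'M[R]_n)
    {E : R -> 'M[R]_n} {k j : 'I_n} :
  (forall i, h ^- k * E h i j @[h --> 0^'] --> 0) ->
  (pow_diag_mx n h^-1 *m (A *m E h)) k j @[h --> 0^'] --> 0.
Proof.
move=> E_small; have entryE h : (pow_diag_mx n h^-1 *m (A *m E h)) k j =
    \sum_(i < n) A k i * (h ^- k * E h i j).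
  rewrite mul_diag_mx !mxE exprVn mulr_sumr; apply: eq_bigr => i _; ring.
have sum0 : \sum_(i < n) A k i * 0 = 0 by rewrite big1 // => i; rewrite mulr0.
under eq_fun do rewrite entryE.
suff : \sum_(i < n) A k i * (h ^- k * E h i j) @[h --> 0^'] --> \sum_(i < n) A k i * 0.
  by rewrite sum0.
by apply: (cvg_big add_continuous) => i _; apply: cvgMl_tmp.
Qed.

Theorem mainTheorem7 (R : realType) (I : set R) (hIopen : open I)
  (hIitv : is_interval I) (n : nat) (y : 'I_n -> R -> R)
  (hy : forall j : 'I_n, Ck_on n.-1 I (y j)) (x : R) (hx : I x) :
  (fun h : R => casorati y h x / h ^+ ((n * n.-1) %/ 2)%N) @ 0%R^'
    --> wronskian y x.
Proof.
have rem_small (k i j : 'I_n) :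
    h ^- k * taylor_rem_mx y x h i j @[h --> 0^'] --> 0.
  have n_gt0 : (0 < n)%N := leq_ltn_trans (leq0n k) (ltn_ord k).
  under eq_fun do rewrite mxE.
  apply: (littleo_pow_cvg0 _ n.-1); last by rewrite -ltnS prednK ?ltn_ord.
  apply: littleo_pow_scale.
  by have := Ck_on_taylor_peano hIopen hx (hy j); rewrite prednK.
apply: (@cvg_trans _ (\det (wronski_mx y x + pow_diag_mx n h^-1 *m
    (invmx (taylor_mx R n) *m taylor_rem_mx y x h)) @[h --> 0^'])).
  apply: near_eq_cvg; near=> h; rewrite casorati_taylor_factor //.
  by near: h; exact: nbhs_dnbhs_neq.
apply: cvg_det => k j; under eq_fun do rewrite mxE.
have := cvgD (cvg_cst (wronski_mx y x k j))
  (cvg0_pow_diag_mxV_mulmx (invmx (taylor_mx R n)) (rem_small k ^~ j)).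
by rewrite addr0; apply.
Unshelve. all: by end_near.
Qed.
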